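(* For trees $(n,s,L)$ and $(n,s',L')$, we have $(n,s,L)\sim(n,s',L')$ if and only if there exists a permutation $\sigma$ of $\{1,\dots,n\}$ such that $\sigma(L)=L'$ and $s'(\sigma(i))=\sigma(s(i))$ for all $i\in\{1,\dots,n-1\}$.
   Context: For $n\ge1$ write $\underline n=\{1,\dots,n\}$. A tree $(n,s,L)$ consists of $L\subseteq\underline n$ and a map $s:\underline{n-1}\to\underline n\setminus L$ with $s(x)>x$ for all $x$, and ($x\le y<s(x)\Rightarrow s(y)\le s(x)$). If $n\notin L$ and $\{k_1<\dots<k_m\}=s^{-1}(n)$, $k_0=0$, $n_i=k_i-k_{i-1}$, the successor trees of $(n,s,L)$ are the trees $(n_i,s_i,L_i)$, $i=1,\dots,m$, with $s_i(j)=s(j+k_{i-1})-k_{i-1}$ and $L_i=\{x-k_{i-1}\mid x\in L\}\cap\underline{n_i}$. For a permutation $\tau$ of $\underline m$, $(n,s^\tau,L^\tau)$ denotes the unique tree (with non-leaf root $n$) whose sequence of successor trees is $(n_{\tau(1)},s_{\tau(1)},L_{\tau(1)}),\dots,(n_{\tau(m)},s_{\tau(m)},L_{\tau(m)})$. The relation $\sim$ is the smallest equivalence relation on trees such that (i) $(n,s,L)\sim(n,s^\tau,L^\tau)$ for every applicable permutation $\tau$, and (ii) if $(n,s,L)$ and $(n',s',L')$ have successor tree sequences $(n_1,s_1,L_1),\dots,(n_m,s_m,L_m)$ and $(n_1,s'_1,L'_1),\dots,(n_m,s'_m,L'_m)$ with $(n_i,s_i,L_i)\sim(n_i,s'_i,L'_i)$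 for all $i$, then $(n,s,L)\sim(n',s',L')$. *)

From mathcomp Require Import all_boot all_fingroup.
Set Implicit Arguments. Unset Strict Implicit. Unset Printing Implicit Defensive.

(* The map s : {1..n-1} -> {1..n} is represented by a
   function nat -> nat which is required to be 0 outside {1..n-1}; the set
   L subset of {1..n} is represented by its characteristic function. *)
Record tree := Tree { tn : nat; ts : nat -> nat; tL : nat -> bool }.

Definition is_tree (t : tree) : Prop :=
  let: Tree n s L := t in
  [/\ 1 <= n,
      (forall x, 1 <= x <= n.-1 -> x < s x <= n /\ ~~ L (s x)),
      (forall x, ~~ (1 <= x <= n.-1) -> s x = 0),
      (forall x, L x -> 1 <= x <= n) &
      (forall x y, 1 <= x <= y -> y < s x -> s y <= s x)].

Definition kseq (t : tree) : seq nat :=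
  [seq k <- iota 1 (tn t).-1 | ts t k == tn t].

(* The successor tree between k_{i-1} = k0 and k_i = k1. *)
Definition sub_tree (t : tree) (k0 k1 : nat) : tree :=
  Tree (k1 - k0)
       (fun j => if 1 <= j < k1 - k0 then ts t (j + k0) - k0 else 0)
       (fun x => (1 <= x <= k1 - k0) && tL t (x + k0)).

(* The sequence of successor trees (meaningful when n is not in L). *)
Definition succs (t : tree) : seq tree :=
  let ks := kseq t in [seq sub_tree t p.1 p.2 | p <- zip (0 :: ks) ks].

(* Grafting a sequence of trees under a new (non-leaf) root:
   the unique tree with non-leaf root whose successor trees are the given ones. *)
Fixpoint graft_s (us : seq tree) (N o x : nat) : nat :=
  match us with
  | [::] => 0
  | u :: us' =>
      if x <= o + tn u then (if x == o + tn u then N else o + ts u (x - o))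
      else graft_s us' N (o + tn u) x
  end.

Fixpoint graft_L (us : seq tree) (o x : nat) : bool :=
  match us with
  | [::] => false
  | u :: us' =>
      if x <= o + tn u then (o < x) && tL u (x - o)
      else graft_L us' (o + tn u) x
  end.

Definition graft (us : seq tree) : tree :=
  let N := (sumn [seq tn u | u <- us]).+1 in
  Tree N (fun x => if 1 <= x < N then graft_s us N 0 x else 0)
         (fun x => (1 <= x < N) && graft_L us 0 x).

Definition dummy_tree : tree := Tree 1 (fun _ => 0) (fun _ => false).

Definition perm_tree (t : tree) (tau : {perm 'I_(size (succs t))}) : tree :=
  graft [seq nth dummy_tree (succs t) (tau i) | i <- enum 'I_(size (succs t))].

Inductive sim : tree -> tree -> Prop :=
| sim_refl t : is_tree t -> sim t t
| sim_sym t u : sim t u -> sim u t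
| sim_trans t u v : sim t u -> sim u v -> sim t v
| sim_perm t (tau : {perm 'I_(size (succs t))}) :
    is_tree t -> ~~ tL t (tn t) -> sim t (perm_tree tau)
| sim_cong t u :
    is_tree t -> is_tree u -> ~~ tL t (tn t) -> ~~ tL u (tn u) ->
    size (succs t) = size (succs u) ->
    (forall i, i < size (succs t) ->
       tn (nth dummy_tree (succs t) i) = tn (nth dummy_tree (succs u) i) /\
       sim (nth dummy_tree (succs t) i) (nth dummy_tree (succs u) i)) ->
    sim t u.

From mathcomp Require Import all_boot all_fingroup zify.
From Stdlib Require Import FunctionalExtensionality IndefiniteDescription.
Set Implicit Arguments. Unset Strict Implicit. Unset Printing Implicit Defensive.

(* Both directions go through [tree_iso]: relabelling by a permutation σ of
   {1..n} that carries leaves to leaves and commutes with the successor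
   maps.  A tree whose root is not a leaf is the graft of its successor
   trees, which occupy consecutive blocks of {1..n-1}.
   Each generator of [sim] is realised by such a σ, since reordering the
   successor trees, or relabelling each of them, relabels the graft.
   Conversely σ fixes the root.  As it commutes with s, it sends the top of
   a block (the point from which s reaches the root) to the top of a block,
   and the iterates of s carry every point of a block to its top; hence σ
   maps blocks onto blocks.  This gives a permutation ρ of the successor
   trees and isomorphisms between matching ones; reordering by ρ, then
   congruence and induction on n, yield [sim]. *)

(** * Forests laid out in consecutive blocks *)

Definition forest_size (us : seq tree) : nat := sumn [seq tn u | u <- us].

Notation tree_at us i := (nth dummy_tree us i).

(* Tree [i] of [us] occupies the points [offset us i + 1 .. offset us i +
   tn (tree_at us i)], and [block us x] is the index of the tree owning [x]. *)
Fixpoint offset (us : seq tree) (i : nat) : nat :=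
  match us, i with
  | u :: us', i'.+1 => tn u + offset us' i'
  | _, _ => 0
  end.

Fixpoint block (us : seq tree) (x : nat) : nat :=
  match us with
  | [::] => 0
  | u :: us' => if x <= tn u then 0 else (block us' (x - tn u)).+1
  end.

Lemma forest_size_cons u us : forest_size (u :: us) = tn u + forest_size us.
Proof. by []. Qed.

Lemma graft_s_offset us N o i y : i < size us -> 1 <= y <= tn (tree_at us i) ->
  graft_s us N o (o + offset us i + y) =
  if y == tn (tree_at us i) then N else o + offset us i + ts (tree_at us i) y.
Proof.
elim: us o i => [|u us IH] o [|i] //= Hi Hy.
- by rewrite addn0 leq_add2l (proj2 (andP Hy)) eqn_add2l addKn.
- have -> : (o + (tn u + offset us i) + y <= o + tn u) = false by lia.
  by rewrite !addnA IH.
Qed.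

Lemma graft_L_offset us o i y : i < size us -> 1 <= y <= tn (tree_at us i) ->
  graft_L us o (o + offset us i + y) = tL (tree_at us i) y.
Proof.
elim: us o i => [|u us IH] o [|i] //= Hi Hy.
- rewrite addn0 leq_add2l (proj2 (andP Hy)) addKn.
  by have -> : o < o + y by lia.
- have -> : (o + (tn u + offset us i) + y <= o + tn u) = false by lia.
  by rewrite !addnA IH.
Qed.

Lemma block_offset us i y : i < size us -> 1 <= y <= tn (tree_at us i) ->
  block us (offset us i + y) = i.
Proof.
elim: us i => [|u us IH] [|i] //= Hi Hy.
- by rewrite (proj2 (andP Hy)).
- have -> : (tn u + offset us i + y <= tn u) = false by lia.
  by rewrite -addnA addKn IH.
Qed.

Lemma offset_bound us i : i < size us ->
  offset us i + tn (tree_at us i) <= forest_size us.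
Proof.
elim: us i => [|u us IH] [|i] //= Hi; rewrite forest_size_cons; first lia.
by have := IH i Hi; lia.
Qed.

Lemma block_bounds us x : 1 <= x <= forest_size us ->
  block us x < size us /\
  offset us (block us x) < x <= offset us (block us x) + tn (tree_at us (block us x)).
Proof.
elim: us x => [|u us IH] x /=; first by rewrite /forest_size /=; lia.
rewrite forest_size_cons => Hx; case: ifP => Hxu /=; first by lia.
by have := IH (x - tn u) ltac:(lia); lia.
Qed.

Lemma forest_pointP us x : 1 <= x <= forest_size us ->
  exists i y, [/\ i < size us, 1 <= y <= tn (tree_at us i) & x = offset us i + y].
Proof.
move=> Hx; have [Hb Hxb] := block_bounds Hx.
by exists (block us x), (x - offset us (block us x)); split => //; lia.
Qed.

Lemma graft_pointP us x : 1 <= x <= (forest_size us).+1 ->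
  x = (forest_size us).+1 \/
  exists i y, [/\ i < size us, 1 <= y <= tn (tree_at us i) & x = offset us i + y].
Proof.
move=> Hx; case: (ltnP x (forest_size us).+1) => H; last by left; lia.
by right; apply: forest_pointP; lia.
Qed.

Section TreeAxioms.
Variable t : tree.
Hypothesis Ht : is_tree t.

Lemma tree_n_gt0 : 1 <= tn t. Proof. by case: t Ht => n s L [] /=. Qed.

Lemma tree_s_bounds x : 1 <= x <= (tn t).-1 -> x < ts t x <= tn t.
Proof. by case: t Ht => n s L [] /= _ H *; case: (H x). Qed.

Lemma tree_s_nonleaf x : 1 <= x <= (tn t).-1 -> ~~ tL t (ts t x).
Proof. by case: t Ht => n s L [] /= _ H *; case: (H x). Qed.

Lemma tree_s_out x : ~~ (1 <= x <= (tn t).-1) -> ts t x = 0.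
Proof. by case: t Ht => n s L [] /= _ _ H *; apply: H. Qed.

Lemma tree_L_bounds x : tL t x -> 1 <= x <= tn t.
Proof. by case: t Ht => n s L [] /= _ _ _ H *; apply: H. Qed.

Lemma tree_s_nested x y : 1 <= x <= y -> y < ts t x -> ts t y <= ts t x.
Proof. by case: t Ht => n s L [] /= _ _ _ _ H *; apply: H. Qed.

Lemma tree_s_le x : ts t x <= tn t.
Proof.
case: (boolP (1 <= x <= (tn t).-1)) => H; first by case/andP: (tree_s_bounds H).
by rewrite tree_s_out.
Qed.

Lemma tree_root_leaf : tL t (tn t) -> tn t = 1.
Proof.
move=> HL; have Hn := tree_n_gt0; case: (ltnP 1 (tn t)) => H; last lia.
have Hs := tree_s_bounds (x := (tn t).-1) ltac:(lia).
have := tree_s_nonleaf (x := (tn t).-1) ltac:(lia).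
have -> : ts t (tn t).-1 = tn t by lia.
by rewrite HL.
Qed.

End TreeAxioms.

Lemma is_treeI t : 1 <= tn t ->
  (forall x, 1 <= x <= (tn t).-1 -> x < ts t x <= tn t /\ ~~ tL t (ts t x)) ->
  (forall x, ~~ (1 <= x <= (tn t).-1) -> ts t x = 0) ->
  (forall x, tL t x -> 1 <= x <= tn t) ->
  (forall x y, 1 <= x <= y -> y < ts t x -> ts t y <= ts t x) -> is_tree t.
Proof. by case: t => n s L *; split. Qed.

Lemma tree_ext a b : tn a = tn b -> ts a =1 ts b -> tL a =1 tL b -> a = b.
Proof.
case: a => n1 s1 L1; case: b => n2 s2 L2 /= -> Hs HL.
by congr Tree; apply: functional_extensionality.
Qed.

Definition all_trees (us : seq tree) : Prop :=
  forall i, i < size us -> is_tree (tree_at us i).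

Lemma all_trees_cons u us : all_trees (u :: us) -> is_tree u /\ all_trees us.
Proof. by move=> H; split => [|i Hi]; [apply: (H 0) | apply: (H i.+1)]. Qed.

Lemma tn_graft us : tn (graft us) = (forest_size us).+1.
Proof. by []. Qed.

Lemma ts_graft us x : ts (graft us) x =
  if 1 <= x < (forest_size us).+1 then graft_s us (forest_size us).+1 0 x else 0.
Proof. by []. Qed.

Lemma tL_graft us x :
  tL (graft us) x = (1 <= x < (forest_size us).+1) && graft_L us 0 x.
Proof. by []. Qed.

Lemma ts_graft_offset us i y : i < size us -> 1 <= y <= tn (tree_at us i) ->
  ts (graft us) (offset us i + y) =
  if y == tn (tree_at us i) then (forest_size us).+1
  else offset us i + ts (tree_at us i) y.
Proof.
move=> Hi Hy; rewrite ts_graft.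
have Hb := offset_bound Hi; have -> : 1 <= offset us i + y < (forest_size us).+1 by lia.
by have := graft_s_offset (forest_size us).+1 0 Hi Hy; rewrite add0n.
Qed.

Lemma tL_graft_offset us i y : i < size us -> 1 <= y <= tn (tree_at us i) ->
  tL (graft us) (offset us i + y) = tL (tree_at us i) y.
Proof.
move=> Hi Hy; rewrite tL_graft.
have Hb := offset_bound Hi; have -> : 1 <= offset us i + y < (forest_size us).+1 by lia.
by have := graft_L_offset 0 Hi Hy; rewrite add0n.
Qed.

Section GraftIsTree.
Variable us : seq tree.
Hypothesis Hus : all_trees us.

Lemma ts_graft_le x : ts (graft us) x <= (forest_size us).+1.
Proof.
case: (boolP (1 <= x <= forest_size us)) => Hx; last first.
  by rewrite ts_graft; case: ifP => //; lia.
have [i [y [Hi Hy ->]]] := forest_pointP Hx.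
rewrite ts_graft_offset //; have := offset_bound Hi.
by case: eqP => // _; have := tree_s_le (Hus Hi) y; lia.
Qed.

Lemma graft_s_bounds x : 1 <= x <= forest_size us ->
  x < ts (graft us) x <= (forest_size us).+1 /\ ~~ tL (graft us) (ts (graft us) x).
Proof.
move=> /forest_pointP [i [y [Hi Hy ->]]].
rewrite ts_graft_offset //; have Hb := offset_bound Hi; case: eqP => Hya.
  by split; [lia | rewrite tL_graft ltnn andbF].
have Hy' : 1 <= y <= (tn (tree_at us i)).-1 by lia.
have Hs := tree_s_bounds (Hus Hi) Hy'; have HL := tree_s_nonleaf (Hus Hi) Hy'.
by split; [lia | rewrite tL_graft_offset //; lia].
Qed.

Lemma graft_s_nested x y : 1 <= x <= y -> y < ts (graft us) x ->
  ts (graft us) y <= ts (graft us) x.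
Proof.
move=> Hxy; case: (boolP (1 <= x <= forest_size us)) => Hx; last first.
  by rewrite ts_graft; case: ifP => //; lia.
have [i [z [Hi Hz Ex]]] := forest_pointP Hx.
rewrite Ex ts_graft_offset //; case: eqP => Hza; first by rewrite ts_graft_le.
move=> Hy; have Hz' : 1 <= z <= (tn (tree_at us i)).-1 by lia.
have Hs := tree_s_bounds (Hus Hi) Hz'.
have -> : y = offset us i + (y - offset us i) by lia.
rewrite ts_graft_offset; try lia.
have -> : (y - offset us i == tn (tree_at us i)) = false by lia.
by rewrite leq_add2l; apply: tree_s_nested; [exact: Hus | lia | lia].
Qed.

Lemma graft_is_tree : is_tree (graft us).
Proof.
apply: is_treeI; rewrite ?tn_graft //.
- by move=> x Hx; apply: graft_s_bounds; lia.
- by move=> x Hx; rewrite ts_graft; case: ifP => //; lia.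
- by move=> x; rewrite tL_graft => /andP[]; lia.
- exact: graft_s_nested.
Qed.

End GraftIsTree.

Fixpoint block_ends o (us : seq tree) : seq nat :=
  if us is u :: us' then (o + tn u) :: block_ends (o + tn u) us' else [::].

Lemma graft_s_root_children us o N : all_trees us -> o + forest_size us < N ->
  [seq k <- iota o.+1 (forest_size us) | graft_s us N o k == N] = block_ends o us.
Proof.
elim: us o => [|u us IH] o //= /all_trees_cons [Hu Hv].
rewrite forest_size_cons => HN; have Ha := tree_n_gt0 Hu.
have -> : tn u = (tn u).-1 + 1 by lia.
rewrite iotaD filter_cat iotaD filter_cat /=.
rewrite (@eq_in_filter _ _ pred0) ?filter_pred0 /=; last first.
  move=> k; rewrite mem_iota => Hk.
  have -> : k <= o + ((tn u).-1 + 1) by lia.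
  have -> : (k == o + ((tn u).-1 + 1)) = false by lia.
  by have := tree_s_le Hu (k - o); lia.
have -> : o.+1 + (tn u).-1 <= o + ((tn u).-1 + 1) by lia.
have -> : o.+1 + (tn u).-1 == o + ((tn u).-1 + 1) by lia.
rewrite eqxx /=; have -> : (tn u).-1 + 1 = tn u by lia.
have -> : o.+1 + (tn u).-1 = o + tn u by lia.
congr (_ :: _); have -> : o.+1 + tn u = (o + tn u).+1 by lia.
rewrite -IH //; last lia.
apply: eq_in_filter => k; rewrite mem_iota => Hk.
by have -> : k <= o + tn u = false by lia.
Qed.

Lemma kseq_graft us : all_trees us -> kseq (graft us) = block_ends 0 us.
Proof.
move=> Hv; rewrite /kseq tn_graft succnK.
rewrite -(graft_s_root_children (o := 0) (N := (forest_size us).+1)) //.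
apply: eq_in_filter => k; rewrite mem_iota => Hk.
by rewrite ts_graft; have -> : 1 <= k < (forest_size us).+1 by lia.
Qed.

Lemma sub_trees_block_ends us o N T : all_trees us ->
  (forall x, o < x <= o + forest_size us ->
     ts T x = graft_s us N o x /\ tL T x = graft_L us o x) ->
  [seq sub_tree T p.1 p.2 | p <- zip (o :: block_ends o us) (block_ends o us)] = us.
Proof.
elim: us o => [|u us IH] o //= /all_trees_cons [Hu Hv].
rewrite forest_size_cons => HT; congr (_ :: _); last first.
  apply: IH => // x Hx; have [-> ->] := HT x ltac:(lia).
  by have -> : x <= o + tn u = false by lia.
rewrite /sub_tree; case: u Hu HT => a s L Hu HT /=.
have Hs0 := tree_s_out Hu; have HLb := tree_L_bounds Hu.
rewrite addKn; congr Tree; apply: functional_extensionality => j.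
- case: ifP => Hj.
  + have [-> _] := HT (j + o) ltac:(rewrite /=; lia) => /=.
    have -> : j + o <= o + a by lia.
    have -> : (j + o == o + a) = false by lia.
    by rewrite addnK addKn.
  + by rewrite -[s j]/(ts (Tree a s L) j) Hs0 //=; lia.
- case: (boolP (1 <= j <= a)) => Hj /=.
  + have [_ ->] := HT (j + o) ltac:(rewrite /=; lia) => /=.
    have -> : j + o <= o + a by lia.
    by rewrite addnK; have -> : o < j + o by lia.
  + by case: (boolP (L j)) => // /(HLb j) /= H; move: Hj; rewrite H.
Qed.

Lemma succs_graft us : all_trees us -> succs (graft us) = us.
Proof.
move=> Hv; rewrite /succs kseq_graft //.
apply: (sub_trees_block_ends (N := (forest_size us).+1)) => // x Hx.
by rewrite ts_graft tL_graft; have -> : 1 <= x < (forest_size us).+1 by lia.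
Qed.

(** * A tree is the graft of its successor trees *)

Fixpoint hit_chain (P : pred nat) (B o : nat) (ks : seq nat) : Prop :=
  if ks is k :: ks' then
    [/\ o < k < B, (forall x, o < x < k -> ~~ P x), P k & hit_chain P B k ks']
  else True.

Lemma hit_chain_filter P B a b o : o < a -> a + b <= B ->
  (forall x, o < x < a -> ~~ P x) -> hit_chain P B o [seq k <- iota a b | P k].
Proof.
elim: b a o => [|b IH] a o //= Hoa Hab Hg.
case: ifP => Pa /=.
- by split; [lia | done | done | apply: IH => [||x]; lia].
- apply: IH => [||x Hx]; [lia | lia |].
  case: (ltnP x a) => Hxa; first by apply: Hg; lia.
  have -> : x = a by lia.
  by rewrite Pa.
Qed.

Lemma hit_chain_last P B o ks : hit_chain P B o ks -> o <= last o ks.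
Proof. by elim: ks o => [|k ks IH] o //= [? _ _ /IH]; lia. Qed.

Section SuccessorTrees.
Variable t : tree.
Hypothesis Ht : is_tree t.
Notation n := (tn t).
Notation s := (ts t).

Definition hits_root : pred nat := fun k => s k == n.

Notation sub_trees o ks := [seq sub_tree t p.1 p.2 | p <- zip (o :: ks) ks].

Lemma kseq_hit_chain : hit_chain hits_root n 0 (kseq t).
Proof.
have Hn := tree_n_gt0 Ht.
by apply: (@hit_chain_filter hits_root n 1 n.-1 0) => [||x]; lia.
Qed.

Lemma last_kseq : last 0 (kseq t) = n.-1.
Proof.
have Hn := tree_n_gt0 Ht; rewrite /kseq.
case: (ltnP 1 n) => Hn2; last by have -> : n.-1 = 0 by lia.
have Hs := tree_s_bounds Ht (x := n.-1) ltac:(lia).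
have -> : n.-1 = n.-2 + 1 by lia.
rewrite iotaD filter_cat /=; have -> : 1 + n.-2 = n.-1 by lia.
have -> : s n.-1 == n by lia.
by rewrite last_cat /=; lia.
Qed.

Lemma sub_tree_is_tree o k : o < k < n ->
  (forall x, o < x < k -> ~~ hits_root x) -> hits_root k -> is_tree (sub_tree t o k).
Proof.
move=> Hok Hg /eqP Hk.
have Hin x : o < x < k -> x < s x <= k.
  move=> Hx; have Hs := tree_s_bounds Ht (x := x) ltac:(lia).
  have /eqP Hne := Hg x Hx; case: (leqP (s x) k) => Hsk; first lia.
  by have := tree_s_nested Ht (x := x) (y := k) ltac:(lia) Hsk; lia.
apply: is_treeI => /=.
- lia.
- move=> x Hx; have -> : 1 <= x < k - o by lia.
  have := Hin (x + o) ltac:(lia) => Hs; split; first lia.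
  have -> : s (x + o) - o + o = s (x + o) by lia.
  by rewrite (negbTE (tree_s_nonleaf Ht _)) ?andbF //; lia.
- by move=> x Hx; case: ifP => //; lia.
- by move=> x /andP[].
- move=> x y Hxy; case: ifP => Hx; last by lia.
  move=> Hy; have -> : 1 <= y < k - o by have := Hin (x + o) ltac:(lia); lia.
  by have := tree_s_nested Ht (x := x + o) (y := y + o) ltac:(lia) ltac:(lia); lia.
Qed.

Lemma sub_trees_all_trees o ks : hit_chain hits_root n o ks -> all_trees (sub_trees o ks).
Proof.
elim: ks o => [|k ks IH] o //= [H1 H2 H3 H4] [|i] Hi /=.
- exact: sub_tree_is_tree.
- exact: IH.
Qed.

Lemma succs_all_trees : all_trees (succs t).
Proof. exact: sub_trees_all_trees kseq_hit_chain. Qed.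

Lemma forest_size_sub_trees o ks : hit_chain hits_root n o ks ->
  forest_size (sub_trees o ks) = last o ks - o.
Proof.
elim: ks o => [|k ks IH] o /=; first by rewrite subnn.
by move=> [H1 _ _ H4]; rewrite forest_size_cons IH //=; have := hit_chain_last H4; lia.
Qed.

Lemma forest_size_succs : forest_size (succs t) = n.-1.
Proof. by rewrite /succs (forest_size_sub_trees kseq_hit_chain) last_kseq subn0. Qed.

Lemma graft_s_sub_trees o ks N : hit_chain hits_root n o ks ->
  forall x, o < x <= last o ks ->
  graft_s (sub_trees o ks) N o x = if s x == n then N else s x.
Proof.
elim: ks o => [|k ks IH] o /=; first lia.
move=> [H1 H2 H3 H4] x Hx; have -> : o + (k - o) = k by lia.
case: ifP => Hxk; last by apply: IH => //; lia.
case: eqP => [->|Hxk']; first by move: H3; rewrite /hits_root => ->.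
have /negbTE -> : ~~ (s x == n) := H2 x ltac:(lia).
have Hs := tree_s_bounds Ht (x := x) ltac:(lia).
have -> : 1 <= x - o < k - o by lia.
have -> : x - o + o = x by lia.
by lia.
Qed.

Lemma graft_L_sub_trees o ks : hit_chain hits_root n o ks ->
  forall x, o < x <= last o ks -> graft_L (sub_trees o ks) o x = tL t x.
Proof.
elim: ks o => [|k ks IH] o /=; first lia.
move=> [H1 H2 H3 H4] x Hx; have -> : o + (k - o) = k by lia.
case: ifP => Hxk; last by apply: IH => //; lia.
have -> : o < x by lia.
have -> : 1 <= x - o <= k - o by lia.
by have -> : x - o + o = x by lia.
Qed.

Lemma graft_succs : ~~ tL t n -> graft (succs t) = t.
Proof.
move=> HLn; have Hn := tree_n_gt0 Ht.
have En : (forest_size (succs t)).+1 = n by rewrite forest_size_succs; lia.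
apply: tree_ext; first by rewrite tn_graft En.
- move=> x; rewrite ts_graft En; case: ifP => Hx; last by rewrite tree_s_out //; lia.
  rewrite /succs (graft_s_sub_trees _ kseq_hit_chain); last by rewrite last_kseq; lia.
  by case: eqP.
- move=> x; rewrite tL_graft En; case: (boolP (0 < x < n)) => Hx /=.
    by rewrite /succs (graft_L_sub_trees kseq_hit_chain) // last_kseq; lia.
  case: (boolP (tL t x)) => // HL; have := tree_L_bounds Ht HL => H.
  have Exn : x = n by lia.
  by move: HLn; rewrite -Exn HL.
Qed.

End SuccessorTrees.

(** * Relabelling isomorphisms *)

Definition relabels n (s s' : nat -> nat) (L L' : nat -> bool) (sg : nat -> nat) :=
  [/\ (forall x, 1 <= x <= n -> 1 <= sg x <= n),
      (forall x y, 1 <= x <= n -> 1 <= y <= n -> sg x = sg y -> x = y),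
      (forall y, 1 <= y <= n -> exists2 x, 1 <= x <= n & sg x = y),
      (forall y, L' y <-> exists2 x, L x & sg x = y) &
      (forall i, 1 <= i <= n.-1 -> s' (sg i) = sg (s i))].

Definition tree_iso_by t u sg :=
  tn t = tn u /\ relabels (tn t) (ts t) (ts u) (tL t) (tL u) sg.

Definition tree_iso t u := exists sg, tree_iso_by t u sg.

Lemma tree_iso_by_id t : tree_iso_by t t id.
Proof.
split=> //; split=> // [y Hy|y]; first by exists y.
by split=> [H|[x H <-]]; first exists y.
Qed.

Lemma tree_iso_root t u sg : is_tree t -> is_tree u -> tree_iso_by t u sg ->
  sg (tn t) = tn t.
Proof.
move=> Ht Hu [En [H1 H2 H3 H4 H5]]; have Hn := tree_n_gt0 Ht.
have [x Hx Ex] := H3 (tn t) ltac:(lia).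
case: (ltnP x (tn t)) => Hxn; last by move: Ex; have -> : x = tn t by lia.
have Hx' : 1 <= x <= (tn t).-1 by lia.
have := H5 x Hx'; rewrite Ex (tree_s_out Hu); last by rewrite -En; lia.
by have := tree_s_bounds Ht Hx'; have := H1 (ts t x); lia.
Qed.

Lemma onto_inverse n (sg : nat -> nat) :
  (forall y, 1 <= y <= n -> exists2 x, 1 <= x <= n & sg x = y) ->
  exists inv : nat -> nat, forall y, 1 <= y <= n -> 1 <= inv y <= n /\ sg (inv y) = y.
Proof.
move=> Hs; exists (fun y => nth 0 (iota 1 n) (find (fun x => sg x == y) (iota 1 n))).
move=> y Hy; have Hh : has (fun x => sg x == y) (iota 1 n).
  by have [x Hx <-] := Hs y Hy; apply/hasP; exists x; rewrite ?mem_iota //; lia.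
have := nth_find 0 Hh; rewrite has_find size_iota in Hh.
by rewrite nth_iota // => /eqP ->; split => //; lia.
Qed.

Lemma tree_iso_sym t u : is_tree t -> is_tree u -> tree_iso t u -> tree_iso u t.
Proof.
move=> Ht Hu [sg Hsg]; have Hr := tree_iso_root Ht Hu Hsg.
case: Hsg => En [H1 H2 H3 H4 H5]; have [inv Hinv] := onto_inverse H3.
have invK x : 1 <= x <= tn t -> inv (sg x) = x.
  by move=> Hx; have [h1 h2] := Hinv (sg x) (H1 x Hx); apply: H2.
exists inv; split => //; rewrite -En; split.
- by move=> x /Hinv [].
- by move=> x y Hx Hy E; rewrite -(proj2 (Hinv x Hx)) -(proj2 (Hinv y Hy)) E.
- by move=> y Hy; exists (sg y); [exact: H1 | exact: invK].
- move=> y; split.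
  + move=> HL; exists (sg y); last exact/invK/(tree_L_bounds Ht).
    by apply/H4; exists y.
  + by move=> [x /H4 [z Hz <-] <-]; rewrite invK // (tree_L_bounds Ht).
- move=> i Hi; have [h1 h2] := Hinv i ltac:(lia).
  have Hin : inv i != tn t by apply/eqP => E; move: h2; rewrite E Hr; lia.
  have Hi' : 1 <= inv i <= (tn t).-1 by lia.
  have := H5 _ Hi'; rewrite h2 => ->.
  by rewrite invK //; have := tree_s_bounds Ht Hi'; lia.
Qed.

Lemma tree_iso_trans t u v : is_tree t -> is_tree u ->
  tree_iso t u -> tree_iso u v -> tree_iso t v.
Proof.
move=> Ht Hu [f Hf] [g Hg]; have Rf := tree_iso_root Ht Hu Hf.
case: Hf => E1 [F1 F2 F3 F4 F5]; case: Hg => E2 [G1 G2 G3 G4 G5].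
exists (g \o f); split; first by rewrite E1.
rewrite -E1 in G1 G2 G3 G5; split.
- by move=> x Hx /=; apply/G1/F1.
- by move=> x y Hx Hy /= E; apply: F2 => //; apply: G2 => //; apply: F1.
- by move=> y /G3 [z /F3 [x Hx <-] <-]; exists x.
- move=> y; split; first by move=> /G4 [z /F4 [x Hx <-] <-]; exists x.
  by move=> [x Hx <-]; apply/G4; exists (f x) => //; apply/F4; exists x.
- move=> i Hi /=; have Hf := F1 i ltac:(lia).
  have Hne : f i != tn t.
    apply/eqP => E; have := F2 i (tn t) ltac:(lia) ltac:(have := tree_n_gt0 Ht; lia).
    by rewrite E Rf => /(_ erefl); lia.
  by rewrite G5 ?F5 //; lia.
Qed.

Section IotaInjections.
Variables (m : nat) (f : nat -> nat).
Hypotheses (f_lt : forall i, i < m -> f i < m)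
           (f_inj : forall i j, i < m -> j < m -> f i = f j -> i = j).

Lemma perm_map_iota : perm_eq (map f (iota 0 m)) (iota 0 m).
Proof.
have Uf : uniq (map f (iota 0 m)).
  by rewrite map_inj_in_uniq ?iota_uniq // => x y; rewrite !mem_iota => Hx Hy; apply: f_inj; lia.
have Sf : {subset map f (iota 0 m) <= iota 0 m}.
  by move=> y /mapP [x]; rewrite !mem_iota => Hx ->; have := f_lt (i := x); lia.
have [_ E] := uniq_min_size Uf Sf ltac:(by rewrite size_map).
by apply: uniq_perm; rewrite ?iota_uniq.
Qed.

Lemma onto_iota j : j < m -> exists2 i, i < m & f i = j.
Proof.
move=> Hj; have : j \in map f (iota 0 m) by rewrite (perm_mem perm_map_iota) mem_iota; lia.
by move=> /mapP [x]; rewrite mem_iota => Hx ->; exists x => //; lia.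
Qed.

End IotaInjections.

Lemma forest_size_nth us :
  forest_size us = sumn [seq tn (tree_at us i) | i <- iota 0 (size us)].
Proof. by rewrite /forest_size -{1}(mkseq_nth dummy_tree us) /mkseq -map_comp. Qed.

Section GraftRelabel.
Variables (us vs : seq tree) (pi : nat -> nat) (sgs : nat -> nat -> nat).
Hypotheses (Hus : all_trees us) (Hvs : all_trees vs) (Hsize : size us = size vs).
Hypotheses (pi_lt : forall i, i < size us -> pi i < size us)
           (pi_inj : forall i j, i < size us -> j < size us -> pi i = pi j -> i = j).
Hypothesis blocks_iso :
  forall i, i < size us -> tree_iso_by (tree_at us i) (tree_at vs (pi i)) (sgs i).

Notation N := (forest_size us).

Lemma forest_size_relabel : forest_size vs = N.
Proof.
rewrite !forest_size_nth -Hsize.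
rewrite -(perm_sumn (perm_map (fun i => tn (tree_at vs i)) (perm_map_iota pi_lt pi_inj))).
rewrite -map_comp; congr sumn; apply/eq_in_map => i; rewrite mem_iota => Hi /=.
by case: (blocks_iso (i := i) ltac:(lia)) => ->.
Qed.

Definition graft_relabel x :=
  if 1 <= x <= N then
    offset vs (pi (block us x)) + sgs (block us x) (x - offset us (block us x))
  else x.

Lemma graft_relabel_offset i y : i < size us -> 1 <= y <= tn (tree_at us i) ->
  graft_relabel (offset us i + y) = offset vs (pi i) + sgs i y.
Proof.
move=> Hi Hy; rewrite /graft_relabel block_offset //; have := offset_bound Hi.
by case: ifP => [_ _|]; [rewrite addKn | lia].
Qed.

Lemma graft_relabel_root : graft_relabel N.+1 = N.+1.
Proof. by rewrite /graft_relabel; case: ifP => //; lia. Qed.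

Lemma graft_relabel_block i y : i < size us -> 1 <= y <= tn (tree_at us i) ->
  [/\ pi i < size vs, 1 <= sgs i y <= tn (tree_at vs (pi i)) &
      offset vs (pi i) + tn (tree_at vs (pi i)) <= forest_size vs].
Proof.
move=> Hi Hy; have [E [H1 _ _ _ _]] := blocks_iso Hi.
have Hpi : pi i < size vs by rewrite -Hsize; apply: pi_lt.
by split => //; [rewrite -E; apply: H1 | exact: offset_bound].
Qed.

Lemma graft_relabel_inj x x' : 1 <= x <= N.+1 -> 1 <= x' <= N.+1 ->
  graft_relabel x = graft_relabel x' -> x = x'.
Proof.
have Es := forest_size_relabel.
case/graft_pointP => [->|[i [y [Hi Hy ->]]]];
case/graft_pointP => [->|[i' [y' [Hi' Hy' ->]]]] //.
- by rewrite graft_relabel_root graft_relabel_offset //; case: (graft_relabel_block Hi' Hy'); lia.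
- by rewrite graft_relabel_root graft_relabel_offset //; case: (graft_relabel_block Hi Hy); lia.
rewrite !graft_relabel_offset // => E.
have [h1 h2 h3] := graft_relabel_block Hi Hy.
have [h1' h2' h3'] := graft_relabel_block Hi' Hy'.
have Ep : pi i = pi i' by rewrite -(block_offset h1 h2) E block_offset.
have Ei := pi_inj Hi Hi' Ep; subst i'.
have [_ [_ H2 _ _ _]] := blocks_iso Hi.
by rewrite (H2 y y') //; lia.
Qed.

Lemma graft_relabel_onto y : 1 <= y <= N.+1 ->
  exists2 x, 1 <= x <= N.+1 & graft_relabel x = y.
Proof.
rewrite -{1}forest_size_relabel.
case/graft_pointP => [->|[j [z [Hj Hz ->]]]].
  by exists N.+1; [lia | rewrite forest_size_relabel graft_relabel_root].
have [i Hi Eij] := onto_iota pi_lt pi_inj (j := j) ltac:(lia); subst j.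
have [En [_ _ H3 _ _]] := blocks_iso Hi; have [w Hw Ew] := H3 z ltac:(lia).
exists (offset us i + w); first by have := offset_bound Hi; lia.
by rewrite graft_relabel_offset // Ew.
Qed.

Lemma graft_relabel_leaves y :
  tL (graft vs) y <-> exists2 x, tL (graft us) x & graft_relabel x = y.
Proof.
have Es := forest_size_relabel; split.
- move=> HL; have := HL; rewrite tL_graft => /andP [Hy _].
  have [j [z [Hj Hz Ey]]] := forest_pointP (x := y) (us := vs) ltac:(lia).
  move: HL; rewrite Ey tL_graft_offset // => HL.
  have [i Hi Eij] := onto_iota pi_lt pi_inj (j := j) ltac:(lia); subst j.
  have [_ [_ _ _ H4 _]] := blocks_iso Hi; have [w Hw Ew] := (proj1 (H4 z)) HL.
  have Hwb := tree_L_bounds (Hus Hi) Hw.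
  by exists (offset us i + w); rewrite ?tL_graft_offset // graft_relabel_offset // Ew.
- move=> [x HL <-]; have := HL; rewrite tL_graft => /andP [Hx _].
  have [i [z [Hi Hz Ex]]] := forest_pointP (x := x) (us := us) ltac:(lia).
  move: HL; rewrite Ex tL_graft_offset // => HL.
  have [h1 h2 h3] := graft_relabel_block Hi Hz.
  rewrite graft_relabel_offset // tL_graft_offset //.
  by have [_ [_ _ _ H4 _]] := blocks_iso Hi; apply/H4; exists z.
Qed.

Lemma graft_relabel_succ x : 1 <= x <= N ->
  ts (graft vs) (graft_relabel x) = graft_relabel (ts (graft us) x).
Proof.
have Es := forest_size_relabel.
move=> /forest_pointP [i [y [Hi Hy ->]]]; have [h1 h2 h3] := graft_relabel_block Hi Hy.
have Hr := tree_iso_root (Hus Hi) (Hvs h1) (blocks_iso Hi).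
have [En [_ H2 _ _ H5]] := blocks_iso Hi.
rewrite graft_relabel_offset // ts_graft_offset // ts_graft_offset //.
case: (eqVneq y (tn (tree_at us i))) => Hya.
  by rewrite Hya Hr -En !eqxx Es graft_relabel_root.
have Hy' : 1 <= y <= (tn (tree_at us i)).-1 by lia.
have Hne : (sgs i y == tn (tree_at vs (pi i))) = false.
  apply/eqP => E; have E' : sgs i y = sgs i (tn (tree_at us i)) by rewrite Hr En.
  have := tree_n_gt0 (Hus Hi).
  by have := H2 y (tn (tree_at us i)) ltac:(lia) ltac:(lia) E'; lia.
rewrite Hne H5 //; have Hs := tree_s_bounds (Hus Hi) Hy'.
by rewrite graft_relabel_offset //; lia.
Qed.

Lemma graft_relabel_iso : tree_iso (graft us) (graft vs).
Proof.
exists graft_relabel; split; first by rewrite !tn_graft forest_size_relabel.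
rewrite tn_graft; split.
- move=> x /graft_pointP [->|[i [y [Hi Hy ->]]]]; first by rewrite graft_relabel_root; lia.
  rewrite graft_relabel_offset //; have [h1 h2 h3] := graft_relabel_block Hi Hy.
  by rewrite -forest_size_relabel; lia.
- exact: graft_relabel_inj.
- exact: graft_relabel_onto.
- exact: graft_relabel_leaves.
- by move=> x Hx; apply: graft_relabel_succ.
Qed.

End GraftRelabel.

(** * Trees related by [sim] are isomorphic *)

(* The recursor generated for [sim] gives no induction hypothesis for the
   pairs of successor trees quantified over in [sim_cong]. *)
Definition sim_nested_ind (Q : tree -> tree -> Prop)
 (Hrefl : forall t, is_tree t -> Q t t)
 (Hsym : forall t u, sim t u -> Q t u -> Q u t)
 (Htrans : forall t u v, sim t u -> Q t u -> sim u v -> Q u v -> Q t v)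
 (Hperm : forall t (tau : {perm 'I_(size (succs t))}),
    is_tree t -> ~~ tL t (tn t) -> Q t (perm_tree tau))
 (Hcong : forall t u, is_tree t -> is_tree u -> ~~ tL t (tn t) -> ~~ tL u (tn u) ->
    size (succs t) = size (succs u) ->
    (forall i, i < size (succs t) ->
       tn (tree_at (succs t) i) = tn (tree_at (succs u) i) /\
       Q (tree_at (succs t) i) (tree_at (succs u) i)) -> Q t u) :
 forall t u, sim t u -> Q t u :=
 fix F t u (H : sim t u) {struct H} : Q t u :=
 match H in sim t u return Q t u with
 | sim_refl t Ht => Hrefl t Ht
 | sim_sym t u H => Hsym t u H (F t u H)
 | sim_trans t u v H1 H2 => Htrans t u v H1 (F t u H1) H2 (F u v H2)
 | sim_perm t tau Ht Hl => Hperm t tau Ht Hl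
 | sim_cong t u Ht Hu Hlt Hlu Hs Hall =>
     Hcong t u Ht Hu Hlt Hlu Hs
       (fun i hi => match Hall i hi with conj a b => conj a (F _ _ b) end)
 end.

Lemma tree_at_perm (us : seq tree) (tau : {perm 'I_(size us)}) i (Hi : i < size us) :
  tree_at [seq tree_at us (tau j) | j <- enum 'I_(size us)] i = tree_at us (tau (Ordinal Hi)).
Proof.
rewrite (nth_map (Ordinal Hi)) ?size_enum_ord //.
by congr (tree_at us (tau _)); apply: val_inj; rewrite /= nth_enum_ord.
Qed.

Lemma permuted_succs_all_trees t (tau : {perm 'I_(size (succs t))}) : is_tree t ->
  all_trees [seq tree_at (succs t) (tau j) | j <- enum 'I_(size (succs t))].
Proof.
by move=> Ht i; rewrite size_map size_enum_ord => Hi; rewrite tree_at_perm; apply: succs_all_trees.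
Qed.

Lemma perm_tree_iso t (tau : {perm 'I_(size (succs t))}) : is_tree t -> ~~ tL t (tn t) ->
  is_tree (perm_tree tau) /\ tree_iso t (perm_tree tau).
Proof.
move=> Ht HL; have Hw := @permuted_succs_all_trees t tau Ht.
have Hp : is_tree (perm_tree tau) by apply: graft_is_tree.
split => //; apply: tree_iso_sym => //.
have E := graft_succs Ht HL; rewrite /perm_tree.
set us := succs t in tau Hw Hp E *.
suff: tree_iso (graft [seq tree_at us (tau i) | i <- enum 'I_(size us)]) (graft us).
  by rewrite E.
pose pi i := if insub i is Some j then val (tau j) else 0.
have Epi i (Hi : i < size us) : pi i = tau (Ordinal Hi).
  by rewrite /pi insubT /=; congr (val (tau _)); apply: val_inj.
apply: (graft_relabel_iso (pi := pi) (sgs := fun _ => id)) => //.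
- exact: succs_all_trees.
- by rewrite size_map size_enum_ord.
- by move=> i; rewrite size_map size_enum_ord => Hi; rewrite (Epi i Hi).
- move=> i j; rewrite size_map size_enum_ord => Hi Hj; rewrite (Epi i Hi) (Epi j Hj).
  by move=> /val_inj /perm_inj /(congr1 val).
- move=> i; rewrite size_map size_enum_ord => Hi.
  by rewrite tree_at_perm (Epi i Hi); apply: tree_iso_by_id.
Qed.

Lemma sim_tree_iso t u : sim t u -> [/\ is_tree t, is_tree u & tree_iso t u].
Proof.
elim/sim_nested_ind: t u / .
- by move=> t Ht; split => //; exists id; apply: tree_iso_by_id.
- by move=> t u _ [H1 H2 H3]; split => //; apply: tree_iso_sym.
- by move=> t u v _ [H1 H2 H3] _ [_ H5 H6]; split => //; apply: tree_iso_trans H3 H6.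
- by move=> t tau Ht HL; have [] := @perm_tree_iso t tau Ht HL.
- move=> t u Ht Hu HLt HLu Hs Hall; split => //.
  rewrite -(graft_succs Ht HLt) -(graft_succs Hu HLu).
  have /functional_choice [sgs Hsgs] : forall i, exists sg, i < size (succs t) ->
      tree_iso_by (tree_at (succs t) i) (tree_at (succs u) i) sg.
    move=> i; case: (ltnP i (size (succs t))) => Hi; last by exists id.
    by have [_ [_ _ [sg Hsg]]] := Hall i Hi; exists sg.
  by apply: (graft_relabel_iso (pi := id) (sgs := sgs)) => //; apply: succs_all_trees.
Qed.

(** * Isomorphic trees are related by [sim] *)

Lemma inj_on_leq lo a lo' b (f : nat -> nat) :
  (forall x, lo <= x < lo + a -> lo' <= f x < lo' + b) ->
  (forall x y, lo <= x < lo + a -> lo <= y < lo + a -> f x = f y -> x = y) -> a <= b.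
Proof.
move=> Hr Hi.
have U : uniq (map f (iota lo a)).
  by rewrite map_inj_in_uniq ?iota_uniq // => x y; rewrite !mem_iota => Hx Hy; apply: Hi; lia.
have S : {subset map f (iota lo a) <= iota lo' b}.
  by move=> y /mapP [x]; rewrite !mem_iota => Hx ->; exact: Hr.
by have := uniq_leq_size U S; rewrite size_map !size_iota.
Qed.

Lemma onto_on_leq lo a lo' b (f : nat -> nat) :
  (forall y, lo' <= y < lo' + b -> exists2 x, lo <= x < lo + a & f x = y) -> b <= a.
Proof.
move=> Hs; have S : {subset iota lo' b <= map f (iota lo a)}.
  by move=> y; rewrite mem_iota => /Hs [x Hx <-]; apply: map_f; rewrite mem_iota.
by have := uniq_leq_size (iota_uniq lo' b) S; rewrite size_map !size_iota.
Qed.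

(* Follow [s] from [x] for at most [k] steps, stopping at the last point
   before the root [N]: the top of the block containing [x]. *)
Fixpoint block_top (s : nat -> nat) (N k x : nat) : nat :=
  if k is k'.+1 then (if s x == N then x else block_top s N k' (s x)) else x.

Lemma block_top_graft us i y k : all_trees us -> i < size us ->
  1 <= y <= tn (tree_at us i) -> tn (tree_at us i) - y <= k ->
  block_top (ts (graft us)) (forest_size us).+1 k (offset us i + y) =
  offset us i + tn (tree_at us i).
Proof.
move=> Hv Hi; elim: k y => [|k IH] y Hy Hk; cbn [block_top].
  by have -> : y = tn (tree_at us i) by lia.
rewrite ts_graft_offset //; case: (eqVneq y (tn (tree_at us i))) => [->|Hya].
  by rewrite eqxx.
have Hy' : 1 <= y <= (tn (tree_at us i)).-1 by lia.
have Hs := tree_s_bounds (Hv i Hi) Hy'; have Hb := offset_bound Hi.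
have -> : (offset us i + ts (tree_at us i) y == (forest_size us).+1) = false by lia.
by apply: IH; lia.
Qed.

Section BlockDecomposition.
Variables (us vs : seq tree) (sg : nat -> nat).
Hypotheses (Hus : all_trees us) (Hvs : all_trees vs)
           (Hsg : tree_iso_by (graft us) (graft vs) sg).

Notation N := (forest_size us).

Lemma forest_size_iso : forest_size vs = N.
Proof. by case: Hsg => /= [[]]. Qed.

Lemma sg_root : sg N.+1 = N.+1.
Proof. exact: (tree_iso_root (graft_is_tree Hus) (graft_is_tree Hvs) Hsg). Qed.

Lemma sg_relabels :
  relabels N.+1 (ts (graft us)) (ts (graft vs)) (tL (graft us)) (tL (graft vs)) sg.
Proof. by case: Hsg. Qed.

Lemma sg_forest x : 1 <= x <= N -> 1 <= sg x <= N.
Proof.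
move=> Hx; have [H1 H2 _ _ _] := sg_relabels.
have := H1 x ltac:(lia); case: (eqVneq (sg x) N.+1) => E; last by lia.
by have := H2 x N.+1 ltac:(lia) ltac:(lia); rewrite E sg_root => /(_ erefl); lia.
Qed.

Lemma sg_succ x : 1 <= x <= N -> ts (graft vs) (sg x) = sg (ts (graft us) x).
Proof. by move=> Hx; have [_ _ _ _ ->] := sg_relabels. Qed.

Lemma block_top_sg k x : 1 <= x <= N ->
  block_top (ts (graft vs)) N.+1 k (sg x) = sg (block_top (ts (graft us)) N.+1 k x).
Proof.
elim: k x => [|k IH] x Hx; cbn [block_top]; rewrite // sg_succ //.
have := tree_s_bounds (graft_is_tree Hus) (x := x); rewrite tn_graft => /(_ ltac:(lia)) Hs.
have -> : (sg (ts (graft us) x) == N.+1) = (ts (graft us) x == N.+1).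
  apply/eqP/eqP => [E|->]; last exact: sg_root.
  case: (eqVneq (ts (graft us) x) N.+1) => // Hne.
  by have := sg_forest (x := ts (graft us) x) ltac:(lia); lia.
by case: eqP => // /eqP Hne; apply: IH; lia.
Qed.

(* [sg] maps block [i] of [us] onto block [image_block i] of [vs]. *)
Definition image_block i := block vs (sg (offset us i + tn (tree_at us i))).

Lemma sg_block_top i : i < size us -> image_block i < size vs /\
  sg (offset us i + tn (tree_at us i)) =
  offset vs (image_block i) + tn (tree_at vs (image_block i)).
Proof.
move=> Hi; have Hb := offset_bound Hi; have Ha := tree_n_gt0 (Hus Hi).
have := sg_forest (x := offset us i + tn (tree_at us i)) ltac:(lia).
rewrite -forest_size_iso => /forest_pointP [j [z [Hj Hz Ez]]].
have Hb' := offset_bound Hj.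
have := block_top_sg N.+1 (x := offset us i + tn (tree_at us i)) ltac:(lia).
rewrite (block_top_graft (k := N.+1) Hus Hi) ?subnn //; last lia.
rewrite {1}Ez -forest_size_iso (block_top_graft Hvs Hj Hz); last lia.
by move=> E; rewrite /image_block -E block_offset //; have := tree_n_gt0 (Hvs Hj); lia.
Qed.

Definition block_restr i y := sg (offset us i + y) - offset vs (image_block i).

Lemma sg_block i y : i < size us -> 1 <= y <= tn (tree_at us i) ->
  [/\ image_block i < size vs, 1 <= block_restr i y <= tn (tree_at vs (image_block i)) &
      sg (offset us i + y) = offset vs (image_block i) + block_restr i y].
Proof.
move=> Hi Hy; have Hb := offset_bound Hi; have [Hji Ht] := sg_block_top Hi.
have := sg_forest (x := offset us i + y) ltac:(lia).
rewrite -forest_size_iso => /forest_pointP [j [z [Hj Hz Ez]]].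
have := block_top_sg N.+1 (x := offset us i + y) ltac:(lia).
rewrite (block_top_graft (k := N.+1) Hus Hi) //; last lia.
have Hb' := offset_bound Hj.
rewrite {1}Ez -forest_size_iso (block_top_graft Hvs Hj Hz); last lia.
rewrite Ht Ez => E.
have Ej : j = image_block i.
  have := tree_n_gt0 (Hvs Hji); have := tree_n_gt0 (Hvs Hj) => a1 a2.
  by have := congr1 (block vs) E; rewrite !block_offset //; lia.
by subst j; rewrite /block_restr; split => //; lia.
Qed.

Lemma image_block_inj i i' : i < size us -> i' < size us ->
  image_block i = image_block i' -> i = i'.
Proof.
move=> Hi Hi' E; have [_ T1] := sg_block_top Hi; have [_ T2] := sg_block_top Hi'.
have [_ H2 _ _ _] := sg_relabels.
have Hb := offset_bound Hi; have Hb' := offset_bound Hi'.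
have Ha := tree_n_gt0 (Hus Hi); have Ha' := tree_n_gt0 (Hus Hi').
have := H2 (offset us i + tn (tree_at us i)) (offset us i' + tn (tree_at us i')).
rewrite T1 T2 E => /(_ ltac:(lia) ltac:(lia) erefl) /(congr1 (block us)).
by rewrite !block_offset //; lia.
Qed.

Lemma sg_preimage x : 1 <= x <= (forest_size vs).+1 ->
  exists2 x', 1 <= x' <= N.+1 & sg x' = x.
Proof. by have [_ _ H3 _ _] := sg_relabels; rewrite forest_size_iso; apply: H3. Qed.

Lemma sg_in_image_block i j w : i < size us -> 1 <= w <= tn (tree_at us i) ->
  block vs (sg (offset us i + w)) = j -> image_block i = j.
Proof.
move=> Hi Hw <-; have [h1 h2 ->] := sg_block Hi Hw.
by rewrite block_offset.
Qed.

Lemma block_preimage i z : i < size us -> 1 <= z <= tn (tree_at vs (image_block i)) ->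
  exists2 w, 1 <= w <= tn (tree_at us i) &
    sg (offset us i + w) = offset vs (image_block i) + z.
Proof.
move=> Hi Hz; have [Hji _] := sg_block_top Hi; have Hb' := offset_bound Hji.
have [x Hx Ex] := sg_preimage (x := offset vs (image_block i) + z) ltac:(lia).
case: (graft_pointP Hx) => [Exn|[i' [w [Hi' Hw Exw]]]].
  by move: Ex; rewrite Exn sg_root -forest_size_iso; lia.
have Ej := sg_in_image_block Hi' Hw (j := image_block i).
rewrite -Exw Ex block_offset // in Ej; have Eii := image_block_inj Hi' Hi (Ej erefl).
by subst i'; exists w; rewrite // -Exw.
Qed.

Lemma image_block_onto j : j < size vs -> exists2 i, i < size us & image_block i = j.
Proof.
move=> Hj; have Hb' := offset_bound Hj; have Ha := tree_n_gt0 (Hvs Hj).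
have [x Hx Ex] := sg_preimage (x := offset vs j + tn (tree_at vs j)) ltac:(lia).
case: (graft_pointP Hx) => [Exn|[i [w [Hi Hw Exw]]]].
  by move: Ex; rewrite Exn sg_root -forest_size_iso; lia.
exists i => //; apply: (sg_in_image_block Hi Hw).
by rewrite -Exw Ex block_offset //; lia.
Qed.

Lemma size_forest_iso : size us = size vs.
Proof.
apply/eqP; rewrite eqn_leq; apply/andP; split.
- apply: (@inj_on_leq 0 _ 0 _ image_block) => [x Hx|x y Hx Hy]; last exact: image_block_inj.
  by have [] := sg_block_top (i := x) ltac:(lia).
- apply: (@onto_on_leq 0 _ 0 _ image_block) => y Hy.
  by have [i Hi Ei] := image_block_onto (j := y) ltac:(lia); exists i.
Qed.

Section Block.
Variable i : nat.
Hypothesis Hi : i < size us.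

Lemma block_restr_inj y y' : 1 <= y <= tn (tree_at us i) -> 1 <= y' <= tn (tree_at us i) ->
  block_restr i y = block_restr i y' -> y = y'.
Proof.
move=> Hy Hy' E; have [_ _ e1] := sg_block Hi Hy; have [_ _ e2] := sg_block Hi Hy'.
have [_ H2 _ _ _] := sg_relabels; have Hb := offset_bound Hi.
have := H2 (offset us i + y) (offset us i + y') ltac:(lia) ltac:(lia).
by rewrite e1 e2 E => /(_ erefl); lia.
Qed.

Lemma block_restr_onto z : 1 <= z <= tn (tree_at vs (image_block i)) ->
  exists2 w, 1 <= w <= tn (tree_at us i) & block_restr i w = z.
Proof. by move=> /(block_preimage Hi) [w Hw Ew]; exists w; rewrite // /block_restr Ew addKn. Qed.

Lemma tn_image_block : tn (tree_at us i) = tn (tree_at vs (image_block i)).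
Proof.
apply/eqP; rewrite eqn_leq; apply/andP; split.
- apply: (@inj_on_leq 1 _ 1 _ (block_restr i)) => [y Hy|y y' Hy Hy'].
    by have [_ h _] := sg_block Hi (y := y) ltac:(lia); lia.
  by apply: block_restr_inj; lia.
- apply: (@onto_on_leq 1 _ 1 _ (block_restr i)) => z Hz.
  by have [w Hw Ew] := block_restr_onto (z := z) ltac:(lia); exists w => //; lia.
Qed.

Lemma block_restr_leaves z :
  tL (tree_at vs (image_block i)) z <-> exists2 w, tL (tree_at us i) w & block_restr i w = z.
Proof.
have [Hji _] := sg_block_top Hi; have [_ _ _ H4 _] := sg_relabels; split.
- move=> HL; have Hz := tree_L_bounds (Hvs Hji) HL.
  have : tL (graft vs) (offset vs (image_block i) + z) by rewrite tL_graft_offset.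
  move=> /H4 [x HLx Ex]; have := HLx; rewrite tL_graft => /andP [Hx _].
  have [i' [w [Hi' Hw Exw]]] := forest_pointP (x := x) (us := us) ltac:(lia).
  have Ej := sg_in_image_block Hi' Hw (j := image_block i).
  rewrite -Exw Ex block_offset // in Ej; have Eii := image_block_inj Hi' Hi (Ej erefl).
  subst i'; exists w; first by move: HLx; rewrite Exw tL_graft_offset.
  by rewrite /block_restr -Exw Ex addKn.
- move=> [w HL <-]; have Hw := tree_L_bounds (Hus Hi) HL.
  have [h1 h2 h3] := sg_block Hi Hw.
  have : tL (graft vs) (sg (offset us i + w)).
    by apply/H4; exists (offset us i + w); rewrite ?tL_graft_offset.
  by rewrite h3 tL_graft_offset.
Qed.

Lemma block_restr_succ y : 1 <= y <= (tn (tree_at us i)).-1 ->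
  ts (tree_at vs (image_block i)) (block_restr i y) = block_restr i (ts (tree_at us i) y).
Proof.
move=> Hy; have Hy1 : 1 <= y <= tn (tree_at us i) by lia.
have [h1 h2 h3] := sg_block Hi Hy1; have Hs := tree_s_bounds (Hus Hi) Hy.
have Hb := offset_bound Hi.
have := sg_succ (x := offset us i + y) ltac:(lia).
rewrite h3 (ts_graft_offset h1 h2) (ts_graft_offset Hi Hy1).
have -> : (y == tn (tree_at us i)) = false by lia.
have [k1 k2 k3] := sg_block Hi (y := ts (tree_at us i) y) ltac:(lia).
case: eqP => Hq.
  move=> E; have := sg_forest (x := offset us i + ts (tree_at us i) y) ltac:(lia).
  by rewrite -E -forest_size_iso; lia.
by rewrite k3 => E; lia.
Qed.

Lemma block_restr_iso :
  tree_iso_by (tree_at us i) (tree_at vs (image_block i)) (block_restr i).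
Proof.
have En := tn_image_block; split => //; split.
- by move=> y Hy; have [_ h _] := sg_block Hi Hy; lia.
- exact: block_restr_inj.
- by move=> z Hz; apply: block_restr_onto; rewrite -En.
- exact: block_restr_leaves.
- exact: block_restr_succ.
Qed.

End Block.

Lemma graft_iso_blocks : exists rho : nat -> nat,
  [/\ (forall j, j < size vs -> rho j < size vs),
      (forall j j', j < size vs -> j' < size vs -> rho j = rho j' -> j = j') &
      (forall j, j < size vs -> tree_iso (tree_at us (rho j)) (tree_at vs j))].
Proof.
have Es := size_forest_iso.
pose rho j := find (fun i => image_block i == j) (iota 0 (size us)).
have Hrho j : j < size vs -> rho j < size us /\ image_block (rho j) = j.
  move=> Hj; have [i Hi Ei] := image_block_onto Hj.
  have Hh : has (fun i => image_block i == j) (iota 0 (size us)).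
    by apply/hasP; exists i; rewrite ?Ei // mem_iota; lia.
  have := nth_find 0 Hh; rewrite has_find size_iota in Hh.
  by rewrite nth_iota // add0n => /eqP.
exists rho; split.
- by move=> j /Hrho []; rewrite Es.
- by move=> j j' Hj Hj' E; rewrite -(proj2 (Hrho j Hj)) -(proj2 (Hrho j' Hj')) E.
- move=> j Hj; have [h1 h2] := Hrho j Hj; exists (block_restr (rho j)).
  by rewrite -{2}h2; apply: block_restr_iso.
Qed.

End BlockDecomposition.

Lemma leaf_root_iso t u sg : is_tree t -> is_tree u -> tree_iso_by t u sg ->
  tL t (tn t) -> u = t.
Proof.
move=> Ht Hu Hsg HLt; have Hr := tree_iso_root Ht Hu Hsg.
case: Hsg => En [_ _ _ H4 _]; have E1 := tree_root_leaf Ht HLt.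
apply: tree_ext; first by rewrite En.
- by move=> x; rewrite (tree_s_out Hu) ?(tree_s_out Ht) // -?En E1 /=; lia.
- move=> x; apply/idP/idP.
  + move/H4 => [y Hy <-]; have := tree_L_bounds Ht Hy; rewrite E1 => Hy1.
    have Ey : y = tn t by lia.
    by rewrite Ey Hr -Ey.
  + move=> Hx; have := tree_L_bounds Ht Hx; rewrite E1 => Hx1.
    have Ex : x = tn t by lia.
    by apply/H4; exists x; rewrite // Ex Hr.
Qed.

Lemma nonleaf_root_iso t u sg : is_tree t -> is_tree u -> tree_iso_by t u sg ->
  ~~ tL t (tn t) -> ~~ tL u (tn u).
Proof.
move=> Ht Hu Hsg HLt; have Hr := tree_iso_root Ht Hu Hsg.
case: Hsg => En [_ H2 _ H4 _]; apply/negP; rewrite -En => /H4 [y Hy Ey].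
have Hy1 := tree_L_bounds Ht Hy; have := tree_n_gt0 Ht => Hn.
have Eyn : y = tn t by apply: H2 => //; [lia | rewrite Ey Hr].
by move: HLt; rewrite -Eyn Hy.
Qed.

Lemma tree_iso_sim t u : is_tree t -> is_tree u -> tree_iso t u -> sim t u.
Proof.
elim: {t}(tn t) {-2}t (leqnn (tn t)) u => [|m IH] t Hm u Ht Hu [sg Hsg].
  by have := tree_n_gt0 Ht; lia.
case: (boolP (tL t (tn t))) => HLt.
  by rewrite (leaf_root_iso Ht Hu Hsg HLt); apply: sim_refl.
have HLu := nonleaf_root_iso Ht Hu Hsg HLt.
have Hsg' : tree_iso_by (graft (succs t)) (graft (succs u)) sg.
  by rewrite graft_succs // graft_succs.
have Ht' := succs_all_trees Ht; have Hu' := succs_all_trees Hu.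
have Es := size_forest_iso Ht' Hu' Hsg'.
have [rho [R1 R2 R3]] := graft_iso_blocks Ht' Hu' Hsg'.
have Rlt (k : 'I_(size (succs t))) : rho k < size (succs t).
  by have := ltn_ord k; have := R1 k; lia.
have f_inj : injective (fun k => Ordinal (Rlt k)).
  move=> a b /(congr1 val) /= /R2 E; apply/val_inj/E.
  - by have := ltn_ord a; lia.
  - by have := ltn_ord b; lia.
pose tau := perm f_inj.
apply: sim_trans (sim_perm tau Ht HLt) _.
have [Hp _] := @perm_tree_iso t tau Ht HLt.
have Hw := @permuted_succs_all_trees t tau Ht.
apply: sim_cong => //; first by rewrite /perm_tree tL_graft tn_graft ltnn.
  by rewrite /perm_tree succs_graft // size_map size_enum_ord Es.
move=> i; rewrite /perm_tree succs_graft // size_map size_enum_ord => Hi.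
rewrite tree_at_perm permE /=; have Hi' : i < size (succs u) by rewrite -Es.
have [sg2 [E2 Hsg2]] := R3 i Hi'; split => //.
apply: IH; last by exists sg2.
- by have := offset_bound (Rlt (Ordinal Hi)); rewrite forest_size_succs //=; lia.
- exact: Ht' (Rlt (Ordinal Hi)).
- exact: Hu' i Hi'.
Qed.

Theorem lemma4 (n : nat) (s s' : nat -> nat) (L L' : nat -> bool) :
  is_tree (Tree n s L) -> is_tree (Tree n s' L') ->
  (sim (Tree n s L) (Tree n s' L') <->
   exists sigma : nat -> nat,
     [/\ (forall x, 1 <= x <= n -> 1 <= sigma x <= n),
         (forall x y, 1 <= x <= n -> 1 <= y <= n -> sigma x = sigma y -> x = y),
         (forall y, 1 <= y <= n -> exists2 x, 1 <= x <= n & sigma x = y),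
         (forall y, L' y <-> exists2 x, L x & sigma x = y) &
         (forall i, 1 <= i <= n.-1 -> s' (sigma i) = sigma (s i))]).
Proof.
move=> Ht Hu; split.
- by move=> /sim_tree_iso [_ _ [sg [_ H]]]; exists sg.
- by move=> [sg H]; apply: tree_iso_sim => //; exists sg.
Qed.
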